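(* For every $\varepsilon>0$ there is a constant $C_\varepsilon$ such that for all positive integers $n$ and all $D\ge0$, the number of pairs $(m,M)$ that are height profiles of some sum-free subset of $\Lambda(R\cup L)$ meeting every fiber and have discrepancy $D$ is at most $2^{\varepsilon D+C_\varepsilon n}$.
   Context: Sum-free: no $a,b,c$ (not necessarily distinct) with $a+b=c$, coordinatewise addition in $\mathbb{Z}^2$. $\Lambda(X)=\mathbb{Z}^2\cap X$. $R=\{(x,y):0.7n\le x+y\le n,\ |x-y|\le0.8n\}$, $L=\{(x,y):2\lceil0.7n\rceil\le x+y\le1.7n,\ |x-y|\le0.4n\}$, $w=\lfloor0.4n\rfloor$. Fibers $R_i=\{(x,y)\in\Lambda(R):x-y=i\}$ ($|i|\le2w$), $L_k=\{(x,y)\in\Lambda(L):x-y=k\}$ ($|k|\le w$). Height $h(x,y)=\lfloor(x+y-\lceil0.7n\rceil)/2\rfloor$ on $R$ and $\lfloor(x+y-2\lceil0.7n\rceil)/2\rfloor$ on $L$. For sum-free $S\subseteq\Lambda(R\cup L)$ meeting every fiber, its height profile is $(m,M)$ with $m(i)=\min h(S\cap R_i)$, $M(k)=\max h(S\cap L_k)$. Let $\mathcal{T}=\{(-t,2t,t):t\in[w]\}\cup\{(-w-t,2t-1,-w-1+t):t\in[w]\}$. For $s\in\{-1,0,1\}$ and $(i,j,k)\in\mathcal{T}$ set $d_s(i)=M(k+s)-m(j+s)-m(i)$ (taken to be $0$ when some index is outside the domain of $m$ or $M$), $D_s=\sum_{(i,j,k)\in\mathcal{T}}|d_s(i)|$,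 and the discrepancy is $D=\max\{D_{-1},D_0,D_1\}$. *)

From Stdlib Require Import ZArith Reals List Bool.
Open Scope Z_scope.
Open Scope bool_scope.

Definition pt := (Z * Z)%type.

(* c = ceil(0.7 n), w = floor(0.4 n), for n >= 0 *)
Definition cc (n : nat) : Z := (7 * Z.of_nat n + 9) / 10.
Definition ww (n : nat) : Z := (4 * Z.of_nat n) / 10.

Definition inR (n : nat) (p : pt) : Prop :=
  7 * Z.of_nat n <= 10 * (fst p + snd p) /\ fst p + snd p <= Z.of_nat n /\
  10 * Z.abs (fst p - snd p) <= 8 * Z.of_nat n.

Definition inL (n : nat) (p : pt) : Prop :=
  2 * cc n <= fst p + snd p /\ 10 * (fst p + snd p) <= 17 * Z.of_nat n /\
  10 * Z.abs (fst p - snd p) <= 4 * Z.of_nat n.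

(* heights (Z.div is floor division for positive divisor) *)
Definition hR (n : nat) (p : pt) : Z := (fst p + snd p - cc n) / 2.
Definition hL (n : nat) (p : pt) : Z := (fst p + snd p - 2 * cc n) / 2.

Definition sum_free (S : pt -> Prop) : Prop :=
  forall a b c, S a -> S b -> S c ->
    ~ (fst a + fst b = fst c /\ snd a + snd b = snd c).

Definition admissible (n : nat) (S : pt -> Prop) : Prop :=
  (forall p, S p -> inR n p \/ inL n p) /\ sum_free S /\
  (forall i, Z.abs i <= 2 * ww n -> exists p, S p /\ inR n p /\ fst p - snd p = i) /\
  (forall k, Z.abs k <= ww n -> exists p, S p /\ inL n p /\ fst p - snd p = k).

(* (m, M) is the height profile of S.  m is defined on [-2w,2w], M on [-w,w];
   they are encoded as functions Z -> Z that vanish outside their domains. *)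
Definition height_profile (n : nat) (S : pt -> Prop) (m M : Z -> Z) : Prop :=
  (forall i, Z.abs i <= 2 * ww n ->
     (exists p, S p /\ inR n p /\ fst p - snd p = i /\ hR n p = m i) /\
     (forall p, S p -> inR n p -> fst p - snd p = i -> m i <= hR n p)) /\
  (forall k, Z.abs k <= ww n ->
     (exists p, S p /\ inL n p /\ fst p - snd p = k /\ hL n p = M k) /\
     (forall p, S p -> inL n p -> fst p - snd p = k -> hL n p <= M k)) /\
  (forall i, 2 * ww n < Z.abs i -> m i = 0) /\
  (forall k, ww n < Z.abs k -> M k = 0).

Definition in_dom_m (n : nat) (i : Z) : bool := Z.abs i <=? 2 * ww n.
Definition in_dom_M (n : nat) (k : Z) : bool := Z.abs k <=? ww n.

Definition dval (n : nat) (m M : Z -> Z) (s i j k : Z) : Z :=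
  if in_dom_m n i && in_dom_m n (j + s) && in_dom_M n (k + s)
  then M (k + s) - m (j + s) - m i else 0.

(* D_s = sum over T of |d_s(i)|, T = {(-t,2t,t)} u {(-w-t,2t-1,-w-1+t)}, t in [w];
   the two families are disjoint (their first coordinates differ). *)
Definition Dsum (n : nat) (m M : Z -> Z) (s : Z) : Z :=
  fold_right Z.add 0
    (map (fun t : nat =>
            let t := Z.of_nat t in
            Z.abs (dval n m M s (- t) (2 * t) t) +
            Z.abs (dval n m M s (- ww n - t) (2 * t - 1) (- ww n - 1 + t)))
         (seq 1 (Z.to_nat (ww n)))).

Definition discrepancy (n : nat) (m M : Z -> Z) : Z :=
  Z.max (Dsum n m M (-1)) (Z.max (Dsum n m M 0) (Dsum n m M 1)).

Definition profile_with_disc (n : nat) (D : nat) (mM : (Z -> Z) * (Z -> Z)) : Prop :=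
  (exists S, admissible n S /\ height_profile n S (fst mM) (snd mM)) /\
  discrepancy n (fst mM) (snd mM) = Z.of_nat D.

(* Each d_s(i) is linear in (m, M), so two profiles with the same d-values and
   the same anchors m(0), m(2), M(0), M(1) have differences satisfying the
   homogeneous recurrences M(k+s) = m(j+s) + m(i) along the triples of T;
   solving these for t = 1, 2, ..., w forces the differences to vanish.  Thus a
   profile is determined by the integer vector of its anchors and all d-values,
   which has length 6w + 4 <= 10n and l1-norm at most 4n + 3D because all
   heights lie in [0, n].  For 0 < x < 1, comparing
   with the generating function of x^|v|_1 shows that there are at most
   x^(-W) (2/(1-x))^N integer vectors of length N and l1-norm at most W;
   x = 2^(-eps/3) gives the bound. *)

From Stdlib Require Import ZArith Reals List Lia Lra FunctionalExtensionality.
Import ListNotations.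

Open Scope R_scope.

Definition sumR {A} (f : A -> R) (l : list A) : R := fold_right (fun a s => f a + s) 0 l.

Lemma sumR_app {A} (f : A -> R) l1 l2 : sumR f (l1 ++ l2) = sumR f l1 + sumR f l2.
Proof. induction l1 as [|a l1 IH]; simpl; [lra|]. rewrite IH; lra. Qed.

Lemma sumR_flat_map {A B} (f : B -> R) (g : A -> list B) l :
  sumR f (flat_map g l) = sumR (fun a => sumR f (g a)) l.
Proof. induction l as [|a l IH]; simpl; auto. rewrite sumR_app, IH; reflexivity. Qed.

Lemma sumR_map {A B} (f : B -> R) (g : A -> B) l : sumR f (map g l) = sumR (fun a => f (g a)) l.
Proof. induction l as [|a l IH]; simpl; auto. rewrite IH; reflexivity. Qed.

Lemma sumR_ext {A} (f g : A -> R) l : (forall a, f a = g a) -> sumR f l = sumR g l.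
Proof. intros H; induction l as [|a l IH]; simpl; auto. rewrite H, IH; reflexivity. Qed.

Lemma sumR_scal {A} (f : A -> R) c l : sumR (fun a => c * f a) l = c * sumR f l.
Proof. induction l as [|a l IH]; simpl; [lra|]. rewrite IH; lra. Qed.

Lemma sumR_nonneg {A} (f : A -> R) l : (forall a, 0 <= f a) -> 0 <= sumR f l.
Proof. intros H; induction l as [|a l IH]; simpl; [lra|]. specialize (H a); lra. Qed.

Lemma sumR_filter_le {A} (f : A -> R) p l : (forall a, 0 <= f a) ->
  sumR f (filter p l) <= sumR f l.
Proof.
  intros H; induction l as [|a l IH]; simpl; [lra|].
  specialize (H a); destruct (p a); simpl; lra.
Qed.

Lemma length_mul_le_sumR {A} (f : A -> R) c l : (forall a, In a l -> c <= f a) ->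
  INR (length l) * c <= sumR f l.
Proof.
  induction l as [|a l IH]; intros H; cbn [length sumR fold_right]; [simpl; lra|].
  rewrite S_INR. specialize (IH (fun b Hb => H b (or_intror Hb))).
  specialize (H a (or_introl eq_refl)). fold (sumR f l). lra.
Qed.

Lemma sumR_geometric x k : 0 <= x < 1 -> sumR (pow x) (seq 0 k) <= 1 / (1 - x).
Proof.
  intros Hx.
  assert (Hclosed : sumR (pow x) (seq 0 k) * (1 - x) = 1 - x ^ k).
  { induction k as [|k IH]; [simpl; lra|].
    rewrite seq_S, sumR_app. simpl. rewrite Rmult_plus_distr_r, IH. ring. }
  assert (0 <= x ^ k) by (apply pow_le; lra).
  apply (Rmult_le_reg_r (1 - x)); [lra|]. rewrite Hclosed. field_simplify; lra.
Qed.

Lemma pow_le_decr x m n : 0 <= x <= 1 -> (m <= n)%nat -> x ^ n <= x ^ m.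
Proof.
  intros Hx Hmn. replace n with (m + (n - m))%nat by lia. rewrite pow_add.
  assert (0 <= x ^ m) by (apply pow_le; lra).
  assert (x ^ (n - m) <= 1) by (rewrite <- (pow1 (n - m)); apply pow_incr; lra).
  nra.
Qed.

Definition l1_norm (v : list Z) : nat := list_sum (map Z.abs_nat v).

Lemma abs_le_l1_norm a v : In a v -> (Z.abs a <= Z.of_nat (l1_norm v))%Z.
Proof.
  unfold l1_norm. induction v as [|b v IH]; intros Hin; [destruct Hin|].
  destruct Hin as [<-|Hin]; simpl; [lia|]. specialize (IH Hin). lia.
Qed.

(* The value 0 is listed twice; duplicates only make the bounds below weaker. *)
Definition int_range (B : nat) : list Z :=
  flat_map (fun k => [Z.of_nat k; (- Z.of_nat k)%Z]) (seq 0 (S B)).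

Fixpoint int_vectors (B N : nat) : list (list Z) :=
  match N with
  | O => [[]]
  | S N => flat_map (fun a => map (cons a) (int_vectors B N)) (int_range B)
  end.

Lemma in_int_range B a : (Z.abs a <= Z.of_nat B)%Z -> In a (int_range B).
Proof.
  intros Ha. apply in_flat_map. exists (Z.abs_nat a). split.
  - apply in_seq. lia.
  - simpl. lia.
Qed.

Lemma in_int_vectors B N v : length v = N ->
  (forall a, In a v -> (Z.abs a <= Z.of_nat B)%Z) -> In v (int_vectors B N).
Proof.
  revert v; induction N as [|N IH]; intros [|a v] Hlen Hv; simpl in Hlen; try lia.
  - now left.
  - apply in_flat_map. exists a. split.
    + apply in_int_range, Hv. now left.
    + apply in_map, IH; [lia|]. intros b Hb. apply Hv. now right.
Qed.

Lemma sumR_int_range x B : 0 <= x < 1 ->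
  sumR (fun a => x ^ Z.abs_nat a) (int_range B) <= 2 / (1 - x).
Proof.
  intros Hx. unfold int_range. rewrite sumR_flat_map.
  rewrite (sumR_ext _ (fun k => 2 * x ^ k)).
  - rewrite sumR_scal. pose proof (sumR_geometric x (S B) Hx). unfold Rdiv in *. lra.
  - intros k. simpl. replace (Z.abs_nat (- Z.of_nat k)) with k by lia.
    rewrite Zabs2Nat.id. lra.
Qed.

Lemma sumR_int_vectors x B N :
  sumR (fun v => x ^ l1_norm v) (int_vectors B N) =
  (sumR (fun a => x ^ Z.abs_nat a) (int_range B)) ^ N.
Proof.
  induction N as [|N IH]; [simpl; lra|].
  cbn [int_vectors pow]. rewrite sumR_flat_map, Rmult_comm, <- sumR_scal.
  apply sumR_ext; intros a. rewrite sumR_map, <- IH, Rmult_comm, <- sumR_scal.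
  apply sumR_ext; intros v.
  unfold l1_norm; simpl. rewrite pow_add. lra.
Qed.

Lemma count_by_l1_norm x N W (L : list (list Z)) : 0 < x < 1 -> NoDup L ->
  (forall v, In v L -> length v = N /\ (l1_norm v <= W)%nat) ->
  INR (length L) * x ^ W <= (2 / (1 - x)) ^ N.
Proof.
  intros Hx HL Hv.
  set (E := filter (fun v => Nat.leb (l1_norm v) W) (int_vectors W N)).
  assert (HLE : incl L E).
  { intros v Hin. destruct (Hv v Hin) as [Hlen Hw]. apply filter_In. split.
    - apply in_int_vectors; auto. intros a Ha. pose proof (abs_le_l1_norm a v Ha). lia.
    - now apply Nat.leb_le. }
  assert (Hpos : forall v, 0 <= x ^ l1_norm v) by (intros; apply pow_le; lra).
  apply Rle_trans with (INR (length E) * x ^ W).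
  { apply Rmult_le_compat_r; [apply pow_le; lra|].
    apply le_INR, NoDup_incl_length; auto. }
  apply Rle_trans with (sumR (fun v => x ^ l1_norm v) E).
  { apply length_mul_le_sumR. intros v Hin. apply filter_In in Hin as [_ Hw].
    apply pow_le_decr; [lra|now apply Nat.leb_le]. }
  apply Rle_trans with (sumR (fun v => x ^ l1_norm v) (int_vectors W N)).
  { now apply sumR_filter_le. }
  rewrite sumR_int_vectors. apply pow_incr. split.
  - apply sumR_nonneg. intros; apply pow_le; lra.
  - apply sumR_int_range; lra.
Qed.

Open Scope Z_scope.

(* [a], [b] stand for the differences of two height profiles; the equations
   with explicit [i], [j], [k] let the needed instances be taken by [apply]. *)
Section ResidualRecurrence.

Variables (w : Z) (a b : Z -> Z).

Hypothesis first_family : forall t s i j k,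
  1 <= t <= w -> -1 <= s <= 1 -> -w <= k <= w ->
  i = - t -> j = 2 * t + s -> k = t + s -> b k = a j + a i.
Hypothesis second_family : forall t s i j k,
  1 <= t <= w -> -1 <= s <= 1 -> -w <= k <= w ->
  i = - w - t -> j = 2 * t - 1 + s -> k = t - w - 1 + s -> b k = a j + a i.
Hypotheses (a0 : a 0 = 0) (a2 : a 2 = 0) (b0 : b 0 = 0) (b1 : b 1 = 0).

(* The values b(-w), ..., b(0) and a(-w-1), ..., a(-2w) all equal [c], which
   is zero only because b(0) = 0 once t reaches w. *)
Let c := a (- (w + 1)).

Definition determined_up_to (t : Z) : Prop :=
  (forall u, 0 <= u <= 2 * t -> a u = 0) /\
  (forall u, 1 <= u <= t -> a (- u) = 0) /\
  (forall u, w + 1 <= u <= w + t -> a (- u) = c) /\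
  (forall k, 0 <= k <= t -> b k = 0) /\
  (forall k, - w <= k <= t - w -> b k = c).

Lemma determined_up_to_1 : 1 <= w -> determined_up_to 1.
Proof.
  intros Hw.
  assert (Ea1 : b 1 = a 2 + a (- 1)) by (apply (first_family 1 0); lia).
  assert (Eb0 : b 0 = a 1 + a (- 1)) by (apply (first_family 1 (-1)); lia).
  assert (Ebw : b (- w) = a 1 + c) by (apply (second_family 1 0); lia).
  assert (Ebw1 : b (1 - w) = a 2 + c) by (apply (second_family 1 1); lia).
  repeat split.
  - intros u Hu. assert (u = 0 \/ u = 1 \/ u = 2) as [-> | [-> | ->]] by lia; lia.
  - intros u Hu. assert (u = 1) as -> by lia. simpl. lia.
  - intros u Hu. assert (u = w + 1) as -> by lia. reflexivity.
  - intros k Hk. assert (k = 0 \/ k = 1) as [-> | ->] by lia; lia.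
  - intros k Hk. assert (k = - w \/ k = 1 - w) as [-> | ->] by lia; lia.
Qed.

Lemma determined_up_to_succ t : 1 <= t < w ->
  determined_up_to t -> determined_up_to (t + 1).
Proof.
  intros Ht (Ha_pos & Ha_neg & Ha_far & Hb_pos & Hb_neg).
  assert (E1 : b (t + 1) = a (2 * t + 1) + a (- t)) by (apply (first_family t 1); lia).
  assert (E2 : b t = a (2 * t + 1) + a (- (t + 1)))
    by (apply (first_family (t + 1) (-1)); lia).
  assert (E3 : b (t - w) = a (2 * t + 1) + a (- (w + t + 1)))
    by (apply (second_family (t + 1) 0); lia).
  assert (E4 : b (t - w - 1) = a (2 * t) + a (- (w + t + 1)))
    by (apply (second_family (t + 1) (-1)); lia).
  assert (E5 : b (t + 1) = a (2 * t + 2) + a (- (t + 1)))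
    by (apply (first_family (t + 1) 0); lia).
  assert (E6 : b (t + 1 - w) = a (2 * t + 2) + a (- (w + t + 1)))
    by (apply (second_family (t + 1) 1); lia).
  rewrite (Ha_neg t) in E1 by lia. rewrite (Hb_pos t) in E2 by lia.
  rewrite (Hb_neg (t - w)) in E3 by lia.
  rewrite (Hb_neg (t - w - 1)), (Ha_pos (2 * t)) in E4 by lia.
  repeat split.
  - intros u Hu. assert (u <= 2 * t \/ u = 2 * t + 1 \/ u = 2 * t + 2) as [? | [-> | ->]] by lia;
      [apply Ha_pos; lia | lia | lia].
  - intros u Hu. assert (u <= t \/ u = t + 1) as [? | ->] by lia; [apply Ha_neg; lia | lia].
  - intros u Hu. assert (u <= w + t \/ u = w + t + 1) as [? | ->] by lia; [apply Ha_far; lia | lia].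
  - intros k Hk. assert (k <= t \/ k = t + 1) as [? | ->] by lia; [apply Hb_pos; lia | lia].
  - intros k Hk. assert (k <= t - w \/ k = t + 1 - w) as [? | ->] by lia; [apply Hb_neg; lia | lia].
Qed.

Lemma recurrence_solution_zero : 0 <= w ->
  (forall i, Z.abs i <= 2 * w -> a i = 0) /\ (forall k, Z.abs k <= w -> b k = 0).
Proof.
  intros Hw0. destruct (Z.eq_dec w 0) as [Hw | Hw].
  { split; intros x Hx; replace x with 0 by lia; assumption. }
  assert (Hind : forall u, 0 <= u -> u + 1 <= w -> determined_up_to (u + 1)).
  { apply (natlike_ind (fun u => u + 1 <= w -> determined_up_to (u + 1))).
    - intros _. apply determined_up_to_1. lia.
    - intros u Hu IH Hle. replace (Z.succ u + 1) with (u + 1 + 1) in * by lia.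
      apply determined_up_to_succ; [lia | apply IH; lia]. }
  assert (Hdet : determined_up_to w).
  { replace w with (w - 1 + 1) at 1 by lia. apply Hind; lia. }
  destruct Hdet as (Ha_pos & Ha_neg & Ha_far & Hb_pos & Hb_neg).
  assert (Hc : c = 0) by (rewrite <- (Hb_neg 0), b0; lia).
  split.
  - intros i Hi. destruct (Z_le_gt_dec 0 i); [apply Ha_pos; lia|].
    replace i with (- (- i)) by lia. destruct (Z_le_gt_dec (- i) w).
    + apply Ha_neg; lia.
    + rewrite Ha_far; lia.
  - intros k Hk. destruct (Z_le_gt_dec 0 k); [apply Hb_pos; lia | rewrite Hb_neg; lia].
Qed.

End ResidualRecurrence.

Lemma l1_norm_app u v : l1_norm (u ++ v) = (l1_norm u + l1_norm v)%nat.
Proof. unfold l1_norm. now rewrite map_app, list_sum_app. Qed.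

Lemma app_inj_length {A} (u1 u2 v1 v2 : list A) :
  length u1 = length u2 -> u1 ++ v1 = u2 ++ v2 -> u1 = u2 /\ v1 = v2.
Proof.
  revert u2; induction u1 as [|x u1 IH]; intros [|y u2] Hlen Heq; simpl in *; try lia; auto.
  injection Heq as -> Heq. destruct (IH u2 ltac:(lia) Heq) as [-> ->]. auto.
Qed.

Lemma flat_map_inj_length {A B} (f g : A -> list B) l :
  (forall x, length (f x) = length (g x)) ->
  flat_map f l = flat_map g l -> forall x, In x l -> f x = g x.
Proof.
  intros Hlen; induction l as [|y l IH]; intros Heq x Hx; [destruct Hx|].
  apply app_inj_length in Heq as [Hy Hl]; [|apply Hlen].
  destruct Hx as [<- | Hx]; auto.
Qed.

Definition residual_pair (n : nat) (m M : Z -> Z) (s : Z) (t : nat) : list Z :=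
  let t := Z.of_nat t in
  [dval n m M s (- t) (2 * t) t; dval n m M s (- ww n - t) (2 * t - 1) (- ww n - 1 + t)].

Definition residual_block (n : nat) (m M : Z -> Z) (s : Z) : list Z :=
  flat_map (residual_pair n m M s) (seq 1 (Z.to_nat (ww n))).

Definition profile_code (n : nat) (m M : Z -> Z) : list Z :=
  [m 0; m 2; M 0; M 1] ++
  residual_block n m M (-1) ++ residual_block n m M 0 ++ residual_block n m M 1.

Lemma length_residual_block n m M s :
  length (residual_block n m M s) = (2 * Z.to_nat (ww n))%nat.
Proof.
  unfold residual_block.
  transitivity (2 * length (seq 1 (Z.to_nat (ww n))))%nat; [|now rewrite length_seq].
  induction (seq 1 (Z.to_nat (ww n))) as [|t l IH]; [reflexivity|].
  cbn [flat_map length]. rewrite length_app, IH. simpl. lia.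
Qed.

Lemma length_profile_code n m M : length (profile_code n m M) = (6 * Z.to_nat (ww n) + 4)%nat.
Proof. unfold profile_code. rewrite !length_app, !length_residual_block. simpl. lia. Qed.

Lemma l1_norm_residual_block n m M s :
  Z.of_nat (l1_norm (residual_block n m M s)) = Dsum n m M s.
Proof.
  unfold residual_block, Dsum. induction (seq 1 (Z.to_nat (ww n))) as [|t l IH]; [reflexivity|].
  cbn [flat_map]. rewrite l1_norm_app, Nat2Z.inj_add, IH. unfold l1_norm; simpl.
  rewrite !Nat2Z.inj_add, !Zabs2Nat.id_abs. lia.
Qed.

Lemma height_profile_bounds n S m M : height_profile n S m M ->
  (forall i, 0 <= m i <= Z.of_nat n) /\ (forall k, 0 <= M k <= Z.of_nat n).
Proof.
  intros (Hm & HM & Hm_out & HM_out). split.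
  - intros i. destruct (Z_le_gt_dec (Z.abs i) (2 * ww n)) as [Hi|Hi]; [|rewrite Hm_out; lia].
    destruct (Hm i Hi) as ((p & _ & (H1 & H2 & _) & _ & <-) & _).
    unfold hR, cc in *. Z.to_euclidean_division_equations. lia.
  - intros k. destruct (Z_le_gt_dec (Z.abs k) (ww n)) as [Hk|Hk]; [|rewrite HM_out; lia].
    destruct (HM k Hk) as ((p & _ & (H1 & H2 & _) & _ & <-) & _).
    unfold hL, cc in *. Z.to_euclidean_division_equations. lia.
Qed.

Lemma l1_norm_profile_code_le n D m M :
  profile_with_disc n D (m, M) -> (l1_norm (profile_code n m M) <= 4 * n + 3 * D)%nat.
Proof.
  intros ((S & _ & Hprof) & Hdisc). cbn [fst snd] in *.
  destruct (height_profile_bounds n S m M Hprof) as [Hm HM].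
  unfold discrepancy in Hdisc. apply Nat2Z.inj_le.
  unfold profile_code. rewrite !l1_norm_app, !Nat2Z.inj_add, !l1_norm_residual_block.
  unfold l1_norm at 1; simpl. rewrite !Nat2Z.inj_add, !Zabs2Nat.id_abs.
  pose proof (Hm 0). pose proof (Hm 2). pose proof (HM 0). pose proof (HM 1). lia.
Qed.

Lemma dval_agree n m1 M1 m2 M2 s i j k :
  dval n m1 M1 s i j k = dval n m2 M2 s i j k ->
  Z.abs i <= 2 * ww n -> Z.abs (j + s) <= 2 * ww n -> Z.abs (k + s) <= ww n ->
  M1 (k + s) - M2 (k + s) = (m1 (j + s) - m2 (j + s)) + (m1 i - m2 i).
Proof.
  unfold dval, in_dom_m, in_dom_M. intros H Hi Hj Hk.
  apply Z.leb_le in Hi, Hj, Hk. rewrite Hi, Hj, Hk in H. simpl in H. lia.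
Qed.

Lemma profile_code_injective n m1 M1 m2 M2 :
  (forall i, 2 * ww n < Z.abs i -> m1 i = 0 /\ m2 i = 0) ->
  (forall k, ww n < Z.abs k -> M1 k = 0 /\ M2 k = 0) ->
  profile_code n m1 M1 = profile_code n m2 M2 -> m1 = m2 /\ M1 = M2.
Proof.
  intros Hm_out HM_out Hcode. set (w := ww n) in *.
  assert (Hw : 0 <= w) by (unfold w, ww; Z.to_euclidean_division_equations; lia).
  unfold profile_code in Hcode.
  injection Hcode as Ea0 Ea2 Eb0 Eb1 Hblocks.
  apply app_inj_length in Hblocks as [Hblock_m Hblocks]; [|now rewrite !length_residual_block].
  apply app_inj_length in Hblocks as [Hblock_0 Hblock_p]; [|now rewrite !length_residual_block].
  assert (Hpair : forall s t, -1 <= s <= 1 -> 1 <= t <= w ->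
    residual_pair n m1 M1 s (Z.to_nat t) = residual_pair n m2 M2 s (Z.to_nat t)).
  { intros s t Hs Ht.
    assert (Hblock : residual_block n m1 M1 s = residual_block n m2 M2 s)
      by (assert (s = -1 \/ s = 0 \/ s = 1) as [-> | [-> | ->]] by lia; assumption).
    apply (flat_map_inj_length (residual_pair n m1 M1 s) (residual_pair n m2 M2 s) _
             (fun _ => eq_refl) Hblock), in_seq. lia. }
  destruct (recurrence_solution_zero w (fun i => m1 i - m2 i) (fun k => M1 k - M2 k))
    as [Hm Hdiff]; try lia.
  - intros t s i j k Ht Hs Hk -> -> ->.
    specialize (Hpair s t Hs Ht). unfold residual_pair in Hpair. rewrite Z2Nat.id in Hpair by lia.
    pose proof (f_equal (fun l => nth 0 l 0) Hpair) as Hfirst. cbn [nth] in Hfirst.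
    apply dval_agree in Hfirst; unfold w in *; lia.
  - intros t s i j k Ht Hs Hk -> -> ->.
    specialize (Hpair s t Hs Ht). unfold residual_pair in Hpair. rewrite Z2Nat.id in Hpair by lia.
    pose proof (f_equal (fun l => nth 1 l 0) Hpair) as Hsecond. cbn [nth] in Hsecond.
    apply dval_agree in Hsecond; unfold w in *; try lia.
    replace (t - ww n - 1 + s) with (- ww n - 1 + t + s) by lia. lia.
  - split; apply functional_extensionality.
    + intros i. destruct (Z_le_gt_dec (Z.abs i) (2 * w)); [specialize (Hm i); lia|].
      destruct (Hm_out i); lia.
    + intros k. destruct (Z_le_gt_dec (Z.abs k) w); [specialize (Hdiff k); lia|].
      destruct (HM_out k); lia.
Qed.

Open Scope R_scope.

Lemma Rpower_pos b y : 0 < Rpower b y.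
Proof. apply exp_pos. Qed.

Lemma le_Rpower2_of_mul_pow A e K W N : 0 < K ->
  A * Rpower 2 (- e) ^ W <= K ^ N -> A <= Rpower 2 (e * INR W + Rlog 2 K * INR N).
Proof.
  intros HK Hle.
  rewrite <- !Rpower_pow, Rpower_mult in Hle by (try apply Rpower_pos; lra).
  rewrite <- (Rpower_Rlog 2 K), Rpower_mult in Hle by lra.
  rewrite Rpower_plus. replace (- e * INR W) with (- (e * INR W)) in Hle by ring.
  assert (Hinv : Rpower 2 (- (e * INR W)) * Rpower 2 (e * INR W) = 1).
  { rewrite <- Rpower_plus, Rplus_opp_l. apply Rpower_O. lra. }
  pose proof (Rpower_pos 2 (e * INR W)).
  apply Rle_trans with (A * Rpower 2 (- (e * INR W)) * Rpower 2 (e * INR W)).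
  - rewrite Rmult_assoc, Hinv. lra.
  - rewrite Rmult_comm. apply Rmult_le_compat_l; lra.
Qed.

Theorem mainTheorem19 :
  forall eps : R, (0 < eps)%R ->
  exists C : R,
  forall (n : nat) (D : nat), (1 <= n)%nat ->
  forall l : list ((Z -> Z) * (Z -> Z)),
    NoDup l ->
    (forall mM, In mM l -> profile_with_disc n D mM) ->
    (INR (length l) <= Rpower 2 (eps * INR D + C * INR n))%R.
Proof.
  intros eps Heps.
  set (x := Rpower 2 (- (eps / 3))).
  assert (Hx : 0 < x < 1).
  { split; [apply Rpower_pos|]. rewrite <- (Rpower_O 2) by lra. apply Rpower_lt; lra. }
  set (K := 2 / (1 - x)).
  assert (HK : 1 <= K).
  { assert (1 <= / (1 - x)) by (rewrite <- Rinv_1; apply Rinv_le_contravar; lra).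
    unfold K, Rdiv. lra. }
  exists (4 * eps / 3 + 10 * Rlog 2 K).
  intros n D Hn l Hnodup Hl.
  set (code := fun mM : (Z -> Z) * (Z -> Z) => profile_code n (fst mM) (snd mM)).
  assert (Hcount : INR (length l) * x ^ (4 * n + 3 * D) <= K ^ (10 * n)).
  { rewrite <- (length_map code l). eapply Rle_trans.
    - apply (count_by_l1_norm x (6 * Z.to_nat (ww n) + 4)); [exact Hx | |].
      + apply NoDup_map_NoDup_ForallPairs; [|exact Hnodup].
        intros [m1 M1] [m2 M2] H1 H2 Heq.
        destruct (Hl _ H1) as ((S1 & _ & _ & _ & Hm1 & HM1) & _).
        destruct (Hl _ H2) as ((S2 & _ & _ & _ & Hm2 & HM2) & _).
        destruct (profile_code_injective n m1 M1 m2 M2) as [-> ->]; auto.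
      + intros v Hv. apply in_map_iff in Hv as ([m M] & <- & Hin).
        split; [apply length_profile_code|]. apply l1_norm_profile_code_le, Hl, Hin.
    - apply Rle_pow; [exact HK|].
      assert (4 * ww n <= 2 * Z.of_nat n)%Z by (unfold ww; Z.to_euclidean_division_equations; lia).
      lia. }
  apply le_Rpower2_of_mul_pow in Hcount; [|lra].
  eapply Rle_trans; [exact Hcount|]. right. f_equal.
  rewrite !plus_INR, !mult_INR. simpl INR. field.
Qed.
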